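(* Let $G=(V,E)$ be a finite undirected graph with $n=|V|$ nodes, adjacency matrix $A$, diagonal degree matrix $D$, normalized adjacency $\tilde A=D^{-1/2}(A+I)D^{-1/2}$ and normalized Laplacian $L=I-\tilde A$, with orthonormal eigendecomposition $L=\Phi\Lambda\Phi^\top$, eigenvalues $\lambda_1\le\lambda_2\le\dots\le\lambda_n$ and corresponding orthonormal eigenvectors $\phi_1,\dots,\phi_n$. Fix $T\ge 1$, $1\le K\le n-1$, a node feature matrix $X\in\mathbb R^{n\times d}$, and let $P=[\phi_2,\dots,\phi_{K+1}]\in\mathbb R^{n\times K}$. Let \[ \mathcal H^{(T)}_{\mathrm{LapPE}}=\{\tilde A^{T}[X\,|\,P]\,w:\ w\in\mathbb R^{d+K}\} \] be the class of outputs of a $T$-layer linearized GCN whose input features are augmented with $P$. If $(1-\lambda_k)^T\neq 0$ for all $k=2,\dots,K+1$, then for every label signal $y\in\mathbb R^n$, \[ \min_{\hat y\in\mathcal H^{(T)}_{\mathrm{LapPE}}}\|y-\hat y\|_2\;\le\;\bigl\|y-\Pi_{\mathrm{span}(\phi_2,\dots,\phi_{K+1})}\,y\bigr\|_2, \] where $\Pi_S$ denotes orthogonal projection onto the subspace $S$.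
   Context: A linearized $T$-layer GCN computes $\tilde A^T H^{(0)}W^{(1)}\cdots W^{(T)}$; with scalar output and sufficiently wide layers the product of weight matrices is an arbitrary vector $w$, giving the hypothesis class above. *)

From HB Require Import structures.
From mathcomp Require Import all_boot all_order all_algebra.
Set Implicit Arguments. Unset Strict Implicit. Unset Printing Implicit Defensive.
Import Order.TTheory GRing.Theory Num.Theory.
Local Open Scope ring_scope.

Section Defs.
Variable R : rcfType.

Definition adjmx n (e : rel 'I_n) : 'M[R]_n := \matrix_(i, j) (e i j)%:R.

Definition degree n (A : 'M[R]_n) (i : 'I_n) : R := \sum_j A i j.

(* D^{-1/2}, with the convention 0^{-1/2} = 0 for isolated nodes *)
Definition Dinvsqrt n (A : 'M[R]_n) : 'M[R]_n :=
  diag_mx (\row_i (Num.sqrt (degree A i))^-1).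

Definition normadj n (A : 'M[R]_n) : 'M[R]_n :=
  Dinvsqrt A *m (A + 1%:M) *m Dinvsqrt A.

Definition normlap n (A : 'M[R]_n) : 'M[R]_n := 1%:M - normadj A.

Definition mxpow n (M : 'M[R]_n) (T : nat) : 'M[R]_n := iter T (mulmx M) 1%:M.

(* P = [phi_2, ..., phi_{K+1}] : columns 1..K (0-based) of Phi *)
Definition lapPE n K (Phi : 'M[R]_n) : 'M[R]_(n, K) :=
  \matrix_(i, j) oapp (fun k : 'I_n => Phi i k) 0 (insub j.+1).

Definition norm2 n (v : 'cV[R]_n) : R := Num.sqrt (\sum_i v i 0 ^+ 2).

Definition in_colspan n m (M : 'M[R]_(n, m)) (v : 'cV[R]_n) : Prop :=
  exists c : 'cV[R]_m, v = M *m c.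

Definition is_orth_proj n m (M : 'M[R]_(n, m)) (y p : 'cV[R]_n) : Prop :=
  in_colspan M p /\ forall s, in_colspan M s -> (s^T *m (y - p)) = 0.

End Defs.

From HB Require Import structures.
From mathcomp Require Import all_boot all_order all_algebra zify.
Import Order.TTheory GRing.Theory Num.Theory.
Local Open Scope ring_scope.

(* [Atilde = I - L] has the same eigenvectors as [L], so [Atilde^T] maps the
   positional encodings [P = [phi_2, ..., phi_(K+1)]] to [P diag((1 - lambda_k)^T)].
   These scalars are nonzero, hence span(P) lies in the column space of
   [Atilde^T [X | P]]: the projection [p = P c] of [y] is itself an output of
   the network, with weights [(0, diag^-1 c)]. *)

Section EigenMatrices.
Set Implicit Arguments.
Unset Strict Implicit.
Variable R : comNzRingType.

Lemma orthonormal_decomp_eigen n (L Phi : 'M[R]_n) (d : 'rV[R]_n) :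
  Phi^T *m Phi = 1%:M -> L = Phi *m diag_mx d *m Phi^T ->
  L *m Phi = Phi *m diag_mx d.
Proof. by move=> Phi_orth ->; rewrite -mulmxA Phi_orth mulmx1. Qed.

Lemma scalar_sub_eigen n (L Phi : 'M[R]_n) (d : 'rV[R]_n) (a : R) :
  L *m Phi = Phi *m diag_mx d ->
  (a%:M - L) *m Phi = Phi *m diag_mx (const_mx a - d).
Proof.
move=> eigL; rewrite mulmxBl eigL mul_scalar_mx -mul_mx_scalar.
by rewrite -diag_const_mx raddfB mulmxBr.
Qed.

Lemma colsub_mul_diag m n n' (f : 'I_n' -> 'I_n) (M : 'M[R]_(m, n)) d :
  colsub f (M *m diag_mx d) = colsub f M *m diag_mx (colsub f d).
Proof. by apply/matrixP => i j; rewrite !mul_mx_diag !mxE. Qed.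

End EigenMatrices.

Section LinearizedGCN.
Set Implicit Arguments.
Unset Strict Implicit.
Variable R : rcfType.

Lemma mxpowS n (A : 'M[R]_n) t : mxpow A t.+1 = A *m mxpow A t.
Proof. by []. Qed.

Lemma mxpow_eigen n (A Phi : 'M[R]_n) (d : 'rV[R]_n) t :
  A *m Phi = Phi *m diag_mx d ->
  mxpow A t *m Phi = Phi *m diag_mx (map_mx (fun x => x ^+ t) d).
Proof.
move=> eigA; elim: t => [|t IHt].
  have -> : map_mx (fun x => x ^+ 0) d = const_mx 1.
    by apply/matrixP => i j; rewrite !mxE expr0.
  by rewrite diag_const_mx mulmx1 mul1mx.
rewrite mxpowS -mulmxA IHt mulmxA eigA -mulmxA mulmx_diag.
by congr (_ *m diag_mx _); apply/matrixP => i j; rewrite ord1 !mxE exprS.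
Qed.

Lemma in_colspan_mul_diag m n (M : 'M[R]_(m, n)) (d : 'rV[R]_n) v :
  (forall j, d 0 j != 0) -> in_colspan M v -> in_colspan (M *m diag_mx d) v.
Proof.
move=> d_neq0 [c ->]; exists (diag_mx (\row_j (d 0 j)^-1) *m c).
rewrite !mulmxA -(mulmxA M) mulmx_diag.
have -> : \row_j (d 0 j * (\row_j (d 0 j)^-1) 0 j) = const_mx 1.
  by apply/matrixP => i j; rewrite !mxE divff.
by rewrite diag_const_mx mulmx1.
Qed.

Lemma in_colspan_row_mxr m n1 n2 (M : 'M[R]_(m, n1)) (N : 'M[R]_(m, n2)) v :
  in_colspan N v -> in_colspan (row_mx M N) v.
Proof. by move=> [c ->]; exists (col_mx 0 c); rewrite mul_row_col mulmx0 add0r. Qed.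

Lemma normadjE n (A : 'M[R]_n) : normadj A = 1%:M - normlap A.
Proof. by rewrite /normlap opprB addrC subrK. Qed.

Definition succ_ord n K (ltKn : (K < n)%N) (j : 'I_K) : 'I_n :=
  Ordinal (leq_ltn_trans (ltn_ord j) ltKn).

Lemma lapPE_colsub n K (ltKn : (K < n)%N) (Phi : 'M[R]_n) :
  lapPE K Phi = colsub (succ_ord ltKn) Phi.
Proof.
apply/matrixP => i j; rewrite !mxE.
by rewrite (insubT (fun k => (k < n)%N) (leq_ltn_trans (ltn_ord j) ltKn)).
Qed.

End LinearizedGCN.

Theorem proposition3p3 (R : rcfType) (n : nat) (e : rel 'I_n)
  (e_sym : symmetric e) (e_irr : irreflexive e)
  (Phi : 'M[R]_n) (lam : 'I_n -> R)
  (Phi_orth : Phi^T *m Phi = 1%:M)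
  (eig : normlap (adjmx R e) = Phi *m diag_mx (\row_i lam i) *m Phi^T)
  (lam_sorted : forall i j : 'I_n, (i <= j)%N -> lam i <= lam j)
  (T K d : nat) (hT : (1 <= T)%N) (hK1 : (1 <= K)%N) (hKn : (K <= n - 1)%N)
  (X : 'M[R]_(n, d))
  (hnz : forall k : 'I_n, (1 <= k <= K)%N -> (1 - lam k) ^+ T != 0)
  (y : 'cV[R]_n) (p : 'cV[R]_n)
  (hp : is_orth_proj (lapPE K Phi) y p) :
  exists w : 'cV[R]_(d + K),
    norm2 (y - mxpow (normadj (adjmx R e)) T *m row_mx X (lapPE K Phi) *m w)
      <= norm2 (y - p).
Proof.
have ltKn : (K < n)%N by lia.
set A := normadj (adjmx R e); set P := lapPE K Phi.
have eigA : A *m Phi = Phi *m diag_mx (const_mx 1 - \row_i lam i).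
  by rewrite /A normadjE; apply/scalar_sub_eigen/orthonormal_decomp_eigen.
pose mu := colsub (succ_ord ltKn) (map_mx (fun x => x ^+ T) (const_mx 1 - \row_i lam i)).
have mu_neq0 j : mu 0 j != 0 by rewrite !mxE; apply: hnz; exact: ltn_ord.
have eigP : mxpow A T *m P = P *m diag_mx mu.
  by rewrite /P lapPE_colsub mulmx_colsub (mxpow_eigen _ eigA) colsub_mul_diag.
have [w pw] : in_colspan (mxpow A T *m row_mx X P) p.
  by rewrite mul_mx_row eigP; apply/in_colspan_row_mxr/in_colspan_mul_diag; [|case: hp].
by exists w; rewrite -pw.
Qed.
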